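(* Let $r\ge 0$ and $d\ge r+1$ be integers and $R=\mathbb{R}[x,y,z]$. Let $\ell_1,\ell_2,\ell_3\in R$ be homogeneous linear forms that are the homogenizations (with respect to $z$) of equations of three distinct lines in $\mathbb{R}^2$ passing through a common point $p$, and let $L\in R$ be the homogenization of an equation of a line in $\mathbb{R}^2$ not containing $p$. Then for every homogeneous polynomial $g\in R$ of degree $d$ there exist homogeneous $u,v\in R$ of degree $d$ and homogeneous $w\in R$ of degree $r-1$ such that \[\ell_3^{r+1}g=\ell_1^{r+1}u+\ell_2^{r+1}v+L^{d-r+1}\ell_3^{r+1}w,\] with $w=0$ when $r=0$. *)

From HB Require Import structures.
From mathcomp Require Import all_boot all_algebra.
From mathcomp Require Import mpoly.
From mathcomp Require Import reals.
Set Implicit Arguments. Unset Strict Implicit. Unset Printing Implicit Defensive.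
Import GRing.Theory Num.Theory.
Local Open Scope ring_scope.

Definition affine_line {R : realType} (a b c : R) : R * R -> bool :=
  fun q => a * q.1 + b * q.2 + c == 0.

Definition is_line_eq {R : realType} (a b c : R) : Prop := (a, b) != (0, 0).

(* Homogenization with respect to z of a x + b y + c : a x + b y + c z in R[x,y,z],
   variables x = 'X_0, y = 'X_1, z = 'X_2. *)
Definition homogenize_lin {R : realType} (a b c : R) : {mpoly R[3]} :=
  a *: 'X_(0 : 'I_3) + b *: 'X_(1 : 'I_3) + c *: 'X_(2 : 'I_3).

(* Since L misses the common point p of the three lines, the forms l1, l2, L
   span all linear forms in x, y, z, so g is a polynomial of degree d in l1, l2
   and L.  Collecting the monomials divisible by L^(d-r+1) writes
   g = L^(d-r+1) w + f with f in the ideal (l1, l2)^r.  As l3 lies in the pencil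
   spanned by l1 and l2, l3^(r+1) f lies in (l1, l2)^(2r+1), which is contained
   in (l1^(r+1), l2^(r+1)). *)

From HB Require Import structures.
From mathcomp Require Import all_boot all_algebra.
From mathcomp Require Import mpoly.
From mathcomp Require Import reals.
From mathcomp Require Import ring zify.
Set Implicit Arguments. Unset Strict Implicit. Unset Printing Implicit Defensive.
Import GRing.Theory Num.Theory.
Local Open Scope ring_scope.

Section FormsPencil.
Variables (R : comNzRingType) (n : nat) (l1 l2 L : {mpoly R[n]}).
Hypotheses (l1_homog : l1 \is 1.-homog) (l2_homog : l2 \is 1.-homog)
  (L_homog : L \is 1.-homog).

Inductive span_forms : nat -> {mpoly R[n]} -> Prop :=
| span_forms1 : span_forms 0 1
| span_forms0 k : span_forms k 0
| span_formsD k f g : span_forms k f -> span_forms k g -> span_forms k (f + g)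
| span_formsZ k c f : span_forms k f -> span_forms k (c *: f)
| span_forms_mull1 k f : span_forms k f -> span_forms k.+1 (l1 * f)
| span_forms_mull2 k f : span_forms k f -> span_forms k.+1 (l2 * f)
| span_forms_mulL k f : span_forms k f -> span_forms k.+1 (L * f).

(* [in_ideal_pow m k f]: f is homogeneous of degree k and lies in (l1, l2)^m. *)
Inductive in_ideal_pow : nat -> nat -> {mpoly R[n]} -> Prop :=
| in_ideal_pow0 k f : f \is k.-homog -> in_ideal_pow 0 k f
| in_ideal_pow_zero m k : in_ideal_pow m k 0
| in_ideal_powD m k f g :
    in_ideal_pow m k f -> in_ideal_pow m k g -> in_ideal_pow m k (f + g)
| in_ideal_pow_mull1 m k f : in_ideal_pow m k f -> in_ideal_pow m.+1 k.+1 (l1 * f)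
| in_ideal_pow_mull2 m k f : in_ideal_pow m k f -> in_ideal_pow m.+1 k.+1 (l2 * f).

Lemma dhomog_linM k (l f : {mpoly R[n]}) :
  l \is 1.-homog -> f \is k.-homog -> l * f \is k.+1.-homog.
Proof. by move=> hl hf; rewrite -add1n; apply: dhomogM. Qed.

Lemma span_forms_homog k f : span_forms k f -> f \is k.-homog.
Proof.
elim=> {k f} [|k|k f g _ ? _ ?|k c f _ ?|k f _ ?|k f _ ?|k f _ ?].
- exact: dhomog1.
- exact: dhomog0.
- exact: dhomogD.
- exact: dhomogZ.
- exact: dhomog_linM.
- exact: dhomog_linM.
- exact: dhomog_linM.
Qed.

Lemma span_formsM j k f g : span_forms j f -> span_forms k g -> span_forms (j + k) (f * g).
Proof.
move=> Hf Hg; elim: Hf => {j f} [|j|j f f' _ ? _ ?|j c f _ ?|j f _ ?|j f _ ?|j f _ ?].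
- by rewrite mul1r.
- by rewrite mul0r; apply: span_forms0.
- by rewrite mulrDl; apply: span_formsD.
- by rewrite -scalerAl; apply: span_formsZ.
- by rewrite -mulrA addSn; apply: span_forms_mull1.
- by rewrite -mulrA addSn; apply: span_forms_mull2.
- by rewrite -mulrA addSn; apply: span_forms_mulL.
Qed.

Lemma span_formsX k f e : span_forms k f -> span_forms (k * e) (f ^+ e).
Proof.
move=> Hf; elim: e => [|e IHe]; first by rewrite muln0 expr0; apply: span_forms1.
by rewrite exprS mulnS; apply: span_formsM.
Qed.

Lemma span_forms_lin s t u : span_forms 1 (s *: l1 + t *: l2 + u *: L).
Proof.
have one := span_forms1.
by apply: span_formsD; first apply: span_formsD; apply: span_formsZ;
  rewrite -[X in span_forms _ X]mulr1; constructor.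
Qed.

Hypothesis span_vars : forall i, span_forms 1 'X_i.

Lemma span_forms_mpolyX m : span_forms (mdeg m) 'X_[m].
Proof.
rewrite mpolyXE_id mdegE.
apply: (big_ind2 span_forms) => [|j1 j2 f1 f2|i _]; [exact: span_forms1 | exact: span_formsM |].
by have := span_formsX (m i) (span_vars i); rewrite mul1n.
Qed.

Lemma span_forms_of_homog k g : g \is k.-homog -> span_forms k g.
Proof.
move=> hg; rewrite (mpolyE g) big_seq.
apply: (big_ind (span_forms k)); [exact: span_forms0 | exact: span_formsD |].
move=> m /(dhomog_mf hg) <-; apply: span_formsZ; exact: span_forms_mpolyX.
Qed.

Lemma in_ideal_pow_homog m k f : in_ideal_pow m k f -> f \is k.-homog.
Proof.
elim=> {m k f} [k f //|m k|m k f g _ ? _ ?|m k f _ ?|m k f _ ?].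
- exact: dhomog0.
- exact: dhomogD.
- exact: dhomog_linM.
- exact: dhomog_linM.
Qed.

Lemma in_ideal_powZ m k c f : in_ideal_pow m k f -> in_ideal_pow m k (c *: f).
Proof.
elim=> {m k f} [k f hf|m k|m k f g _ ? _ ?|m k f _ ?|m k f _ ?].
- by apply: in_ideal_pow0; apply: dhomogZ.
- by rewrite scaler0; apply: in_ideal_pow_zero.
- by rewrite scalerDr; apply: in_ideal_powD.
- by rewrite scalerAr; apply: in_ideal_pow_mull1.
- by rewrite scalerAr; apply: in_ideal_pow_mull2.
Qed.

Lemma in_ideal_pow_mulL m k f : in_ideal_pow m k f -> in_ideal_pow m k.+1 (L * f).
Proof.
elim=> {m k f} [k f hf|m k|m k f g _ ? _ ?|m k f _ ?|m k f _ ?].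
- by apply: in_ideal_pow0; apply: dhomog_linM.
- by rewrite mulr0; apply: in_ideal_pow_zero.
- by rewrite mulrDr; apply: in_ideal_powD.
- by rewrite mulrCA; apply: in_ideal_pow_mull1.
- by rewrite mulrCA; apply: in_ideal_pow_mull2.
Qed.

Lemma in_ideal_pow_mul_pencilX s t m k j f :
  in_ideal_pow m k f -> in_ideal_pow (j + m) (j + k) ((s *: l1 + t *: l2) ^+ j * f).
Proof.
move=> Hf; elim: j => [|j IHj]; first by rewrite expr0 mul1r.
rewrite exprS -mulrA mulrDl -!scalerAl.
by apply: in_ideal_powD; apply: in_ideal_powZ; constructor.
Qed.

Definition in_monomial_ideal a b k f := exists u v,
  [/\ u \is (k - a).-homog, v \is (k - b).-homog & f = l1 ^+ a * u + l2 ^+ b * v].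

Lemma in_monomial_ideal0 a b k : in_monomial_ideal a b k 0.
Proof. by exists 0, 0; rewrite !dhomog0 !mulr0 addr0. Qed.

Lemma in_monomial_idealD a b k f g :
  in_monomial_ideal a b k f -> in_monomial_ideal a b k g ->
  in_monomial_ideal a b k (f + g).
Proof.
move=> [u [v [hu hv ->]]] [u' [v' [hu' hv' ->]]].
by exists (u + u'), (v + v'); rewrite !dhomogD // !mulrDr addrACA.
Qed.

Lemma in_monomial_ideal0l b k f : f \is k.-homog -> in_monomial_ideal 0 b k f.
Proof. by exists f, 0; rewrite subn0 dhomog0 expr0 mul1r mulr0 addr0. Qed.

Lemma in_monomial_ideal0r a k f : f \is k.-homog -> in_monomial_ideal a 0 k f.
Proof. by exists 0, f; rewrite subn0 dhomog0 expr0 mul1r mulr0 add0r. Qed.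

Lemma in_monomial_ideal_mull1 a b k f : (b <= k)%N ->
  in_monomial_ideal a b k f -> in_monomial_ideal a.+1 b k.+1 (l1 * f).
Proof.
move=> hb [u [v [hu hv ->]]]; exists u, (l1 * v); split=> //.
  by rewrite subSn //; apply: dhomog_linM.
by rewrite mulrDr mulrA -exprS mulrCA.
Qed.

Lemma in_monomial_ideal_mull2 a b k f : (a <= k)%N ->
  in_monomial_ideal a b k f -> in_monomial_ideal a b.+1 k.+1 (l2 * f).
Proof.
move=> ha [u [v [hu hv ->]]]; exists (l2 * u), v; split=> //.
  by rewrite subSn //; apply: dhomog_linM.
by rewrite mulrDr mulrCA [l2 * (_ * v)]mulrA -exprS.
Qed.

(* A product of a + b - 1 factors from {l1, l2} has at least a factors l1 or
   at least b factors l2. *)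
Lemma in_monomial_ideal_of_pow m k f a b : in_ideal_pow m k f -> (m <= k)%N ->
  (a + b <= m.+1)%N -> in_monomial_ideal a b k f.
Proof.
move=> Hf; elim: Hf a b => {m k f} [k f hf|m k|m k f g _ IHf _ IHg|m k f Hf IHf|m k f Hf IHf]
  a b hmk hab.
- case: a hab => [|[|a]] hab; first exact: in_monomial_ideal0l; last lia.
  by case: b hab => // _; apply: in_monomial_ideal0r.
- exact: in_monomial_ideal0.
- by apply: in_monomial_idealD; [apply: IHf | apply: IHg].
- have hf := in_ideal_pow_homog Hf.
  case: a hab => [|[|a]] hab; first exact/in_monomial_ideal0l/dhomog_linM.
    by exists f, 0; rewrite subSS subn0 hf dhomog0 expr1 mulr0 addr0.
  by apply: in_monomial_ideal_mull1; [lia | apply: IHf; lia].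
- have hf := in_ideal_pow_homog Hf.
  case: b hab => [|[|b]] hab; first exact/in_monomial_ideal0r/dhomog_linM.
    by exists 0, f; rewrite subSS subn0 hf dhomog0 expr1 mulr0 add0r.
  by apply: in_monomial_ideal_mull2; [lia | apply: IHf; lia].
Qed.

Definition splits_off_L k f := forall e, (e <= k)%N ->
  exists2 w, w \is (k - e).-homog & in_ideal_pow (k.+1 - e) k (f - L ^+ e * w).

Lemma splits_off_L0 k : splits_off_L k 0.
Proof. by move=> e _; exists 0; rewrite ?dhomog0 // mulr0 subr0; apply: in_ideal_pow_zero. Qed.

Lemma splits_off_LD k f g :
  splits_off_L k f -> splits_off_L k g -> splits_off_L k (f + g).
Proof.
move=> Hf Hg e he; have [w hw Hw] := Hf e he; have [w' hw' Hw'] := Hg e he.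
exists (w + w'); first exact: dhomogD.
by rewrite mulrDr opprD addrACA; apply: in_ideal_powD.
Qed.

Lemma splits_off_LZ k c f : splits_off_L k f -> splits_off_L k (c *: f).
Proof.
move=> Hf e he; have [w hw Hw] := Hf e he.
by exists (c *: w); rewrite ?dhomogZ // -scalerAr -scalerBr; apply: in_ideal_powZ.
Qed.

Lemma splits_off_L_mul_pencil (l : {mpoly R[n]}) k f :
  l \is 1.-homog -> (forall m j h, in_ideal_pow m j h -> in_ideal_pow m.+1 j.+1 (l * h)) ->
  f \is k.-homog -> splits_off_L k f -> splits_off_L k.+1 (l * f).
Proof.
move=> hl l_ideal hf Hf e; rewrite leq_eqVlt ltnS => /orP[/eqP ->|he].
  exists 0; first exact: dhomog0.
  by rewrite mulr0 subr0 subSn // subnn; apply/l_ideal/in_ideal_pow0.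
have [w hw Hw] := Hf e he; exists (l * w).
  by rewrite subSn //; apply: dhomog_linM.
by rewrite mulrCA -mulrBr subSn ?(leqW he) //; apply: l_ideal.
Qed.

Lemma splits_off_L_mulL k f :
  f \is k.-homog -> splits_off_L k f -> splits_off_L k.+1 (L * f).
Proof.
move=> hf Hf [_|e he].
  exists (L * f); first exact: dhomog_linM.
  by rewrite expr0 mul1r subrr; apply: in_ideal_pow_zero.
have [w hw Hw] := Hf e he; exists w => //.
by rewrite subSS exprS -mulrA -mulrBr; apply: in_ideal_pow_mulL.
Qed.

Lemma span_forms_splits_off_L k f : span_forms k f -> splits_off_L k f.
Proof.
elim=> {k f} [|k|k f g _ ? _ ?|k c f _ ?|k f Hf ?|k f Hf ?|k f Hf ?].
- case=> [_|//]; exists 1; first exact: dhomog1.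
  by rewrite expr0 mul1r subrr; apply: in_ideal_pow_zero.
- exact: splits_off_L0.
- exact: splits_off_LD.
- exact: splits_off_LZ.
- apply: splits_off_L_mul_pencil; rewrite ?(span_forms_homog Hf) //.
  exact: in_ideal_pow_mull1.
- apply: splits_off_L_mul_pencil; rewrite ?(span_forms_homog Hf) //.
  exact: in_ideal_pow_mull2.
- by apply: splits_off_L_mulL; rewrite ?(span_forms_homog Hf).
Qed.

Lemma pencil_power_decomposition s t l3 r d g :
  l3 = s *: l1 + t *: l2 -> (r + 1 <= d)%N -> g \is d.-homog ->
  exists u v w, [/\ u \is d.-homog, v \is d.-homog, w \is (r - 1)%N.-homog,
    (r = 0%N -> w = 0) &
    l3 ^+ r.+1 * g = l1 ^+ r.+1 * u + l2 ^+ r.+1 * v + L ^+ (d - r + 1) * l3 ^+ r.+1 * w].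
Proof.
move=> hl3 hd hg.
have [w [f [hw hw0 Hf ->]]] : exists w f, [/\ w \is (r - 1)%N.-homog, (r = 0%N -> w = 0),
    in_ideal_pow r d f & g = f + L ^+ (d - r + 1) * w].
  case: r hd => [|r] hd.
    by exists 0, g; rewrite dhomog0 mulr0 addr0; split=> //; apply: in_ideal_pow0.
  have [w hw Hw] := span_forms_splits_off_L (span_forms_of_homog hg) (leq_subr r d).
  have -> : (d - r.+1 + 1 = d - r)%N by lia.
  exists w, (g - L ^+ (d - r) * w); rewrite subrK; split=> //.
    by have -> : (r.+1 - 1 = d - (d - r))%N by lia.
  by have -> : r.+1 = (d.+1 - (d - r))%N by lia.
have := in_ideal_pow_mul_pencilX s t r.+1 Hf; rewrite -hl3 => Hl3f.
have [||u [v [hu hv huv]]] := in_monomial_ideal_of_pow (a := r.+1) (b := r.+1) Hl3f;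
  [lia | lia |].
rewrite addKn in hu hv; exists u, v, w; split=> //.
by rewrite mulrDr huv mulrCA mulrA.
Qed.
End FormsPencil.

Lemma perp_parallel (F : idomainType) (a b a' b' u v : F) : (a, b) != (0, 0) ->
  a * b' - a' * b = 0 -> a * u + b * v = 0 -> a' * u + b' * v = 0.
Proof.
move=> hab hD huv.
have Ea : a * (a' * u + b' * v) = a' * (a * u + b * v) + v * (a * b' - a' * b) by ring.
have Eb : b * (a' * u + b' * v) = b' * (a * u + b * v) - u * (a * b' - a' * b) by ring.
rewrite huv hD !mulr0 addr0 in Ea; rewrite huv hD !mulr0 subr0 in Eb.
move: hab; rewrite xpair_eqE negb_and => /orP[] /negPf hn.
  by move/eqP: Ea; rewrite mulf_eq0 hn => /eqP.
by move/eqP: Eb; rewrite mulf_eq0 hn => /eqP.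
Qed.

Section Lines.
Variable R : realType.
Implicit Types (a b c : R) (p : R * R).

Lemma homogenize_lin_homog a b c : homogenize_lin a b c \is 1.-homog.
Proof.
by rewrite /homogenize_lin !dhomogD // dhomogZ // dhomogX; apply/eqP; exact: mdeg1.
Qed.

Lemma homogenize_linZ s a b c :
  s *: homogenize_lin a b c = homogenize_lin (s * a) (s * b) (s * c).
Proof. by rewrite /homogenize_lin !scalerDr !scalerA. Qed.

Lemma homogenize_linD a b c a' b' c' :
  homogenize_lin a b c + homogenize_lin a' b' c' =
  homogenize_lin (a + a') (b + b') (c + c').
Proof. by rewrite /homogenize_lin !scalerDl addrACA (addrACA (a *: _)). Qed.

Lemma affine_line_shift a b c p q : affine_line a b c p ->
  affine_line a b c q = (a * (q.1 - p.1) + b * (q.2 - p.2) == 0).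
Proof.
rewrite /affine_line => /eqP hp.
have -> : a * q.1 + b * q.2 + c = a * (q.1 - p.1) + b * (q.2 - p.2) + (a * p.1 + b * p.2 + c)
  by ring.
by rewrite hp addr0.
Qed.

Lemma eq_affine_line_det0 a b c a' b' c' p :
  is_line_eq a b c -> is_line_eq a' b' c' ->
  affine_line a b c p -> affine_line a' b' c' p ->
  a * b' - a' * b = 0 -> affine_line a b c = affine_line a' b' c'.
Proof.
move=> h h' hp hp' hD; apply: boolp.funext => q.
rewrite (affine_line_shift q hp) (affine_line_shift q hp').
apply/eqP/eqP; first exact: perp_parallel.
by apply: perp_parallel h' _; rewrite -oppr0 -hD; ring.
Qed.

Lemma affine_line_coef a b c p : affine_line a b c p -> c = - (a * p.1 + b * p.2).
Proof. by move=> /eqP h; rewrite -[RHS]addr0 -h; ring. Qed.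

Lemma homogenize_lin_pencil a1 b1 c1 a2 b2 c2 a b c p :
  a1 * b2 - a2 * b1 != 0 ->
  affine_line a1 b1 c1 p -> affine_line a2 b2 c2 p -> affine_line a b c p ->
  exists s t, homogenize_lin a b c =
    s *: homogenize_lin a1 b1 c1 + t *: homogenize_lin a2 b2 c2.
Proof.
move=> hD h1 h2 h.
exists ((a * b2 - a2 * b) / (a1 * b2 - a2 * b1)), ((a1 * b - a * b1) / (a1 * b2 - a2 * b1)).
rewrite !homogenize_linZ homogenize_linD; congr homogenize_lin;
  rewrite ?(affine_line_coef h1) ?(affine_line_coef h2) ?(affine_line_coef h); by field.
Qed.

Lemma homogenize_lin_span a1 b1 c1 a2 b2 c2 aL bL cL a b c p :
  a1 * b2 - a2 * b1 != 0 ->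
  affine_line a1 b1 c1 p -> affine_line a2 b2 c2 p -> ~~ affine_line aL bL cL p ->
  exists s t u, homogenize_lin a b c = s *: homogenize_lin a1 b1 c1 +
    t *: homogenize_lin a2 b2 c2 + u *: homogenize_lin aL bL cL.
Proof.
move=> hD h1 h2 hK.
pose k := (a * p.1 + b * p.2 + c) / (aL * p.1 + bL * p.2 + cL).
have [|s [t hst]] := homogenize_lin_pencil (a := a - k * aL) (b := b - k * bL)
    (c := c - k * cL) hD h1 h2.
  by apply/eqP; rewrite /k; field.
exists s, t, k; rewrite -hst homogenize_linZ homogenize_linD.
by congr homogenize_lin; ring.
Qed.
End Lines.

Lemma mpolyX_homogenize_lin (R : realType) (i : 'I_3) :
  exists a b c : R, 'X_i = homogenize_lin a b c.
Proof.
case: i => -[|[|[|//]]] hi; [exists 1, 0, 0 | exists 0, 1, 0 | exists 0, 0, 1];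
  rewrite /homogenize_lin !scale0r scale1r ?add0r ?addr0;
  by congr mpolyX; congr mnm1; apply: val_inj.
Qed.

Theorem lemma5p2 (R : realType) (r d : nat) (hd : (r + 1 <= d)%N)
  (a1 b1 c1 a2 b2 c2 a3 b3 c3 aL bL cL : R) (p : R * R)
  (h1 : is_line_eq a1 b1 c1) (h2 : is_line_eq a2 b2 c2) (h3 : is_line_eq a3 b3 c3)
  (hL : is_line_eq aL bL cL)
  (hp1 : affine_line a1 b1 c1 p) (hp2 : affine_line a2 b2 c2 p)
  (hp3 : affine_line a3 b3 c3 p)
  (hd12 : affine_line a1 b1 c1 <> affine_line a2 b2 c2)
  (hd13 : affine_line a1 b1 c1 <> affine_line a3 b3 c3)
  (hd23 : affine_line a2 b2 c2 <> affine_line a3 b3 c3)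
  (hpL : ~~ affine_line aL bL cL p) :
  let l1 := homogenize_lin a1 b1 c1 in
  let l2 := homogenize_lin a2 b2 c2 in
  let l3 := homogenize_lin a3 b3 c3 in
  let L := homogenize_lin aL bL cL in
  forall g : {mpoly R[3]}, g \is d.-homog ->
  exists u v w : {mpoly R[3]},
    [/\ u \is d.-homog, v \is d.-homog, w \is (r - 1)%N.-homog,
        (r = 0%N -> w = 0) &
        l3 ^+ r.+1 * g = l1 ^+ r.+1 * u + l2 ^+ r.+1 * v + L ^+ (d - r + 1) * l3 ^+ r.+1 * w].
Proof.
move=> l1 l2 l3 L g hg.
have hD : a1 * b2 - a2 * b1 != 0.
  by apply/eqP => /(eq_affine_line_det0 h1 h2 hp1 hp2).
have [s [t hl3]] := homogenize_lin_pencil hD hp1 hp2 hp3.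
apply: pencil_power_decomposition hl3 hd hg; try exact: homogenize_lin_homog.
move=> i; have [a [b [c ->]]] := mpolyX_homogenize_lin R i.
have [s' [t' [u ->]]] := homogenize_lin_span a b c hD hp1 hp2 hpL.
exact: span_forms_lin.
Qed.
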